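(* Let $e$ be a curve and $\delta>0$. Then each of the offsets $e_{-\delta}$ and $e_{+\delta}$ is monotone, i.e. meets every vertical line and every horizontal line in a connected set.
   Context: A curve is an open, bounded, piecewise-algebraic arc in $\mathbb{R}^2$ that is both $x$-monotone and $y$-monotone. For a point $a$ and a set $s$, $a<_y s$ means that $a$ and $s$ overlap in $x$ (some $q\in s$ has $q_x=a_x$) and $a_y<q_y$ for every $q\in s$ with $q_x=a_x$; $a>_y s$ is defined symmetrically. ${\rm dist}(a,e)=\inf_{q\in e}|a-q|$. The $\delta$-offsets of $e$ are $e_{-\delta}=\{a: a<_y e,\ {\rm dist}(a,e)=\delta\}$ and $e_{+\delta}=\{a: a>_y e,\ {\rm dist}(a,e)=\delta\}$. *)

From Stdlib Require Import Reals Lra List.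
Open Scope R_scope.

Definition pt := (R * R)%type.
Definition pset := pt -> Prop.

Definition edist (a q : pt) : R :=
  sqrt ((fst a - fst q)^2 + (snd a - snd q)^2).

(* Bivariate real polynomials: list of monomials (c, i, j) meaning c x^i y^j *)
Definition poly2 := list (R * nat * nat).
Definition peval (p : poly2) (a : pt) : R :=
  fold_right (fun m acc => let '(c, i, j) := m in c * fst a ^ i * snd a ^ j + acc) 0 p.
Definition poly2_nonzero (p : poly2) : Prop := exists a : pt, peval p a <> 0.

Definition cont_at (g : R -> pt) (t : R) : Prop :=
  continuity_pt (fun s => fst (g s)) t /\ continuity_pt (fun s => snd (g s)) t.

Definition open_arc_param (e : pset) (g : R -> pt) : Prop :=
  (forall t, 0 < t < 1 -> cont_at g t) /\
  (forall s t, 0 < s < 1 -> 0 < t < 1 -> g s = g t -> s = t) /\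
  (forall a, e a <-> exists t, 0 < t < 1 /\ g t = a).

Definition bounded (e : pset) : Prop :=
  exists M, forall a, e a -> Rabs (fst a) <= M /\ Rabs (snd a) <= M.

Definition piecewise_algebraic (g : R -> pt) : Prop :=
  exists (n : nat) (t : nat -> R) (P : nat -> poly2),
    t 0%nat = 0 /\ t n = 1 /\
    (forall i, (i < n)%nat -> t i < t (S i)) /\
    (forall i, (i < n)%nat -> poly2_nonzero (P i)) /\
    (forall i s, (i < n)%nat -> t i <= s <= t (S i) -> 0 < s < 1 ->
                 peval (P i) (g s) = 0).

Definition x_monotone (e : pset) : Prop :=
  forall a b, e a -> e b -> fst a = fst b -> a = b.
Definition y_monotone (e : pset) : Prop :=
  forall a b, e a -> e b -> snd a = snd b -> a = b.

Definition is_curve (e : pset) : Prop :=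
  (exists g, open_arc_param e g /\ piecewise_algebraic g) /\
  bounded e /\ x_monotone e /\ y_monotone e.

Definition below (a : pt) (s : pset) : Prop :=
  (exists q, s q /\ fst q = fst a) /\
  (forall q, s q -> fst q = fst a -> snd a < snd q).
Definition above (a : pt) (s : pset) : Prop :=
  (exists q, s q /\ fst q = fst a) /\
  (forall q, s q -> fst q = fst a -> snd q < snd a).

Definition dist_is (a : pt) (e : pset) (d : R) : Prop :=
  (forall q, e q -> d <= edist a q) /\
  (forall d', (forall q, e q -> d' <= edist a q) -> d' <= d).

Definition offset_minus (e : pset) (delta : R) : pset :=
  fun a => below a e /\ dist_is a e delta.
Definition offset_plus (e : pset) (delta : R) : pset :=
  fun a => above a e /\ dist_is a e delta.

(* A subset of R is connected iff it is an interval (order-convex) *)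
Definition interval_set (P : R -> Prop) : Prop :=
  forall u v w, P u -> P w -> u <= v <= w -> P v.

Definition monotone_set (S : pset) : Prop :=
  (forall c, interval_set (fun y => S (c, y))) /\
  (forall c, interval_set (fun x => S (x, c))).

(* A curve is the graph x = h(y) of a strictly monotone function h over an
   interval of heights: continuity and injectivity of the parametrisation give
   the intermediate value property in y and force the x- and y-coordinates to
   be ordered alike up to reversal. Nothing else about e is used.
   Each offset then meets every vertical and every horizontal line in at most
   one point: if two points of e_{-delta} shared such a line, splitting e by
   height shows that every point of e is at squared distance >= D from one of
   them, for some D > delta^2, contradicting dist = delta. The offset e_{+delta}
   is e_{-delta} for the reflection of e in the x-axis. *)

From Stdlib Require Import Reals Lra Classical Ranalysis5.
Open Scope R_scope.

Definition between (a b c : R) : Prop := a < b < c \/ c < b < a.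

Lemma between_sym a b c : between a b c -> between c b a.
Proof. unfold between; lra. Qed.

Lemma between_swap_l a b c : between a b c -> ~ between b a c.
Proof. unfold between; lra. Qed.

Lemma between_swap_r a b c : between a b c -> ~ between a c b.
Proof. unfold between; lra. Qed.

Lemma between_trichotomy a b c : a <> b -> b <> c -> a <> c ->
  between a b c \/ between b a c \/ between a c b.
Proof. unfold between; intros; lra. Qed.

Lemma IVT_between (f : R -> R) a b L : a < b ->
  (forall t, a <= t <= b -> continuity_pt f t) -> between (f a) L (f b) ->
  exists t, a <= t <= b /\ f t = L.
Proof.
  intros Hab Hf HL.
  destruct HL as [HL | HL].
  - destruct (IVT_interv (fun t => f t - L) a b) as [t [Ht Hft]]; try lra.
    { intros t Ht; apply (continuity_pt_minus f (fun _ => L)); auto.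
      now apply continuity_pt_const. }
    exists t; split; [exact Ht | lra].
  - destruct (IVT_interv (fun t => L - f t) a b) as [t [Ht Hft]]; try lra.
    { intros t Ht; apply (continuity_pt_minus (fun _ => L) f); auto.
      now apply continuity_pt_const. }
    exists t; split; [exact Ht | lra].
Qed.

Definition cont_inj01 (f : R -> R) : Prop :=
  (forall t, 0 < t < 1 -> continuity_pt f t) /\
  (forall s t, 0 < s < 1 -> 0 < t < 1 -> f s = f t -> s = t).

Lemma cont_inj01_opp f : cont_inj01 f -> cont_inj01 (fun t => - f t).
Proof.
  intros [Hc Hi]; split.
  - intros t Ht; apply (continuity_pt_opp f); auto.
  - intros s t Hs Ht E; apply Hi; auto; lra.
Qed.

(* Both sides of a strict maximum at b would reach the level halfway between
   f b and max (f a) (f c), at two distinct parameters. *)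
Lemma cont_inj01_no_peak f a b c : cont_inj01 f -> 0 < a -> a < b -> b < c -> c < 1 ->
  f a < f b -> f c < f b -> False.
Proof.
  intros [Hc Hi] Ha Hab Hbc Hc1 Hfab Hfcb.
  set (L := (f b + Rmax (f a) (f c)) / 2).
  pose proof (Rmax_l (f a) (f c)); pose proof (Rmax_r (f a) (f c)).
  pose proof (Rmax_lub_lt (f a) (f c) (f b) Hfab Hfcb).
  destruct (IVT_between f a b L) as [t1 [Ht1 Hft1]]; auto.
  { intros; apply Hc; lra. } { left; unfold L; lra. }
  destruct (IVT_between f b c L) as [t2 [Ht2 Hft2]]; auto.
  { intros; apply Hc; lra. } { right; unfold L; lra. }
  assert (t1 = t2) by (apply Hi; lra || congruence).
  assert (t1 = b) by lra; subst; unfold L in Hft1; lra.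
Qed.

Lemma cont_inj01_between f a b c : cont_inj01 f -> 0 < a -> a < b -> b < c -> c < 1 ->
  between (f a) (f b) (f c).
Proof.
  intros Hf Ha Hab Hbc Hc1.
  pose proof Hf as [_ Hi].
  assert (f a <> f b) by (intro E; apply Hi in E; lra).
  assert (f c <> f b) by (intro E; apply Hi in E; lra).
  destruct (Rlt_or_le (f a) (f b)), (Rlt_or_le (f c) (f b)).
  - exfalso; now apply (cont_inj01_no_peak f a b c).
  - left; lra.
  - right; lra.
  - exfalso; apply (cont_inj01_no_peak (fun t => - f t) a b c);
      auto using cont_inj01_opp; lra.
Qed.

Lemma cont_inj01_between_iff f a b c : cont_inj01 f ->
  0 < a < 1 -> 0 < b < 1 -> 0 < c < 1 ->
  between a b c <-> between (f a) (f b) (f c).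
Proof.
  intros Hf Ha Hb Hc.
  assert (Hdir : forall x y z, 0 < x < 1 -> 0 < y < 1 -> 0 < z < 1 ->
            between x y z -> between (f x) (f y) (f z)).
  { intros x y z Hx Hy Hz [Hxyz | Hxyz].
    - apply cont_inj01_between; auto; lra.
    - apply between_sym, cont_inj01_between; auto; lra. }
  split; [now apply Hdir|].
  intros Hfb.
  assert (a <> b) by (intros <-; destruct Hfb; lra).
  assert (b <> c) by (intros <-; destruct Hfb; lra).
  assert (a <> c) by (intros <-; destruct Hfb; lra).
  destruct (between_trichotomy a b c) as [Habc | [Hbac | Hacb]]; auto.
  - exfalso; apply (between_swap_l _ _ _ Hfb); now apply Hdir.
  - exfalso; apply (between_swap_r _ _ _ Hfb); now apply Hdir.
Qed.

Definition monotone_arc (e : pset) : Prop :=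
  y_monotone e /\
  (forall r q h, e r -> e q -> snd r < h < snd q -> exists s, e s /\ snd s = h) /\
  (forall r s t, e r -> e s -> e t -> snd r < snd s < snd t ->
     between (fst r) (fst s) (fst t)).

Lemma curve_monotone_arc e : is_curve e -> monotone_arc e.
Proof.
  intros [[g [[Hc [Hi He]] _]] [_ [Hxm Hym]]].
  assert (Hge : forall t, 0 < t < 1 -> e (g t)) by (intros t Ht; apply He; eauto).
  assert (Hx : cont_inj01 (fun t => fst (g t))).
  { split; [intros t Ht; apply Hc; auto|].
    intros s t Hs Ht E; apply Hi; auto. }
  assert (Hy : cont_inj01 (fun t => snd (g t))).
  { split; [intros t Ht; apply Hc; auto|].
    intros s t Hs Ht E; apply Hi; auto. }
  split; [exact Hym | split].
  - intros r q h Hr Hq Hh.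
    apply He in Hr as [tr [Htr <-]]; apply He in Hq as [tq [Htq <-]].
    assert (Hlevel : forall a b, 0 < a < 1 -> 0 < b < 1 -> a < b ->
              between (snd (g a)) h (snd (g b)) -> exists s, e s /\ snd s = h).
    { intros a b Ha Hb Hab Hbt.
      destruct (IVT_between (fun t => snd (g t)) a b h) as [t [Ht Hgt]]; auto.
      { intros; apply Hc; lra. }
      exists (g t); split; [apply Hge; lra | exact Hgt]. }
    destruct (Rtotal_order tr tq) as [Hlt | [-> | Hgt]].
    + apply (Hlevel tr tq); auto; left; lra.
    + lra.
    + apply (Hlevel tq tr); auto; right; lra.
  - intros r s t Hr Hs Ht Hrst.
    apply He in Hr as [tr [Htr <-]]; apply He in Hs as [ts [Hts <-]];
      apply He in Ht as [tt [Htt <-]].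
    apply (cont_inj01_between_iff _ tr ts tt Hx Htr Hts Htt).
    apply (cont_inj01_between_iff _ tr ts tt Hy Htr Hts Htt).
    now left.
Qed.

Section MonotoneArc.

Variable e : pset.
Hypothesis He : monotone_arc e.

Lemma arc_level_point r q h : e r -> e q -> snd r <= h < snd q ->
  exists s, e s /\ snd s = h.
Proof.
  intros Hr Hq [[Hrh | <-] Hhq].
  - destruct He as [_ [Hivt _]]; eauto.
  - eauto.
Qed.

Lemma arc_xgap_below r s q : e r -> e s -> e q -> snd r <= snd s < snd q ->
  (fst q - fst s)^2 + (fst s - fst r)^2 <= (fst q - fst r)^2.
Proof.
  destruct He as [Hym [_ Hbt]].
  intros Hr Hs Hq [[Hrs | Hrs] Hsq].
  - destruct (Hbt r s q Hr Hs Hq (conj Hrs Hsq)) as [H | H]; nra.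
  - rewrite (Hym r s Hr Hs Hrs); nra.
Qed.

Lemma arc_far_below q h d : e q -> h < snd q ->
  (forall s, e s -> snd s = h -> d^2 <= (fst q - fst s)^2) ->
  forall r, e r -> snd r <= h -> d^2 <= (fst q - fst r)^2.
Proof.
  intros Hq Hhq Hlevel r Hr Hrh.
  destruct (arc_level_point r q h Hr Hq (conj Hrh Hhq)) as [s [Hs Hsh]].
  pose proof (Hlevel s Hs Hsh).
  pose proof (arc_xgap_below r s q Hr Hs Hq ltac:(lra)).
  pose proof (pow2_ge_0 (fst s - fst r)); lra.
Qed.

(* Uniformity comes from a single point z at height l: everything lower is
   farther from fst q than z, and z is strictly farther than the point at
   height h. *)
Lemma arc_uniformly_far_below q l h d : e q -> l < h < snd q ->
  (forall s, e s -> snd s = h -> d^2 <= (fst q - fst s)^2) ->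
  exists A, d^2 < A /\ forall r, e r -> snd r < l -> A <= (fst q - fst r)^2.
Proof.
  intros Hq Hlhq Hlevel.
  destruct (classic (exists r0, e r0 /\ snd r0 < l)) as [[r0 [Hr0 Hr0l]] | Hnone].
  - destruct (arc_level_point r0 q l Hr0 Hq ltac:(lra)) as [z [Hz Hzl]].
    destruct (arc_level_point z q h Hz Hq ltac:(lra)) as [s [Hs Hsh]].
    exists ((fst q - fst z)^2); split.
    + pose proof (Hlevel s Hs Hsh).
      destruct He as [_ [_ Hbt]].
      destruct (Hbt z s q Hz Hs Hq ltac:(lra)); nra.
    + intros r Hr Hrl.
      pose proof (arc_xgap_below r z q Hr Hz Hq ltac:(lra)).
      pose proof (pow2_ge_0 (fst z - fst r)); lra.
  - exists (d^2 + 1); split; [lra|].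
    intros r Hr Hrl; exfalso; eauto.
Qed.

End MonotoneArc.

Definition sqdist (a q : pt) : R := (fst a - fst q)^2 + (snd a - snd q)^2.

Lemma dist_is_sq_le a e d q : dist_is a e d -> 0 <= d -> e q -> d^2 <= sqdist a q.
Proof.
  intros [Hlb _] Hd Hq.
  specialize (Hlb q Hq); unfold edist in Hlb; fold (sqdist a q) in Hlb.
  assert (0 <= sqdist a q)
    by (unfold sqdist; pose proof (pow2_ge_0 (fst a - fst q));
        pose proof (pow2_ge_0 (snd a - snd q)); lra).
  rewrite <- (sqrt_sqrt (sqdist a q)) by assumption.
  simpl; apply Rmult_le_compat; lra.
Qed.

Lemma dist_is_sq_ge a e d D : dist_is a e d -> 0 <= d ->
  (forall q, e q -> D <= sqdist a q) -> D <= d^2.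
Proof.
  intros [_ Hglb] Hd HD.
  destruct (Rlt_or_le D 0) as [HD0 | HD0]; [nra|].
  assert (sqrt D <= d).
  { apply Hglb; intros q Hq; apply sqrt_le_1_alt, HD, Hq. }
  rewrite <- (sqrt_sqrt D) by assumption.
  pose proof (sqrt_pos D); simpl; apply Rmult_le_compat; lra.
Qed.

Section OffsetMinus.

Variables (e : pset) (d : R).
Hypotheses (He : monotone_arc e) (Hd : 0 < d).

(* Points of e at height >= w are farther from (c,u) than from (c,w), by the
   vertical gap w - u; points lower down are horizontally at least d away
   from the vertical line, strictly so (uniformly) below the midpoint. *)
Lemma offset_minus_vertical_lt c u w : u < w ->
  offset_minus e d (c, u) -> offset_minus e d (c, w) -> False.
Proof.
  intros Huw [[_ Hu_below] Hu_dist] [[[q [Hq Hqx]] Hw_below] Hw_dist]; simpl in *.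
  subst c.
  pose proof (Hw_below q Hq eq_refl) as Hwq; simpl in Hwq.
  assert (Hw_far : forall r, e r -> d^2 <= sqdist (fst q, w) r)
    by (intros; apply (dist_is_sq_le _ e); auto; lra).
  assert (Hlevel : forall s, e s -> snd s = w -> d^2 <= (fst q - fst s)^2).
  { intros s Hs Hsw; pose proof (Hw_far s Hs) as H.
    unfold sqdist in H; simpl in H; rewrite Hsw in H; nra. }
  set (m := (u + w) / 2).
  destruct (arc_uniformly_far_below e He q m w d Hq ltac:(unfold m; lra) Hlevel)
    as [A [HA Hlow]].
  set (D := Rmin A (d^2 + (w - u)^2 / 4)).
  assert (HDd : d^2 < D) by (apply Rmin_glb_lt; nra).
  enough (D <= d^2) by lra.
  apply (dist_is_sq_ge (fst q, u) e d); [assumption | lra |].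
  intros r Hr; unfold sqdist; simpl.
  pose proof (Rmin_l A (d^2 + (w - u)^2 / 4)) as HDA.
  pose proof (Rmin_r A (d^2 + (w - u)^2 / 4)) as HDmid.
  fold D in HDA, HDmid.
  destruct (Rlt_or_le (snd r) m) as [Hrm | Hrm]; [|destruct (Rle_or_lt (snd r) w) as [Hrw | Hrw]].
  - pose proof (Hlow r Hr Hrm); pose proof (pow2_ge_0 (u - snd r)); lra.
  - pose proof (arc_far_below e He q w d Hq Hwq Hlevel r Hr Hrw).
    unfold m in Hrm; nra.
  - pose proof (Hw_far r Hr); unfold sqdist in *; simpl in *; nra.
Qed.

(* With q, q' the points of e above (u,c), (w,c) and q lower: points of e up
   to q's height are farther from (w,c) than from (u,c) by the horizontal gap;
   up to the midpoint height they stay horizontally away from fst q', and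
   above it they are vertically far from c. *)
Lemma offset_minus_horizontal_lt c u w q q' :
  offset_minus e d (u, c) -> offset_minus e d (w, c) ->
  e q -> fst q = u -> e q' -> fst q' = w -> snd q < snd q' -> False.
Proof.
  intros [[_ Hu_below] Hu_dist] [_ Hw_dist] Hq Hqx Hq' Hqx' Hqq'; simpl in *.
  subst u w.
  assert (Hu_far : forall r, e r -> d^2 <= sqdist (fst q, c) r)
    by (intros; apply (dist_is_sq_le _ e); auto; lra).
  assert (Hqc : d <= snd q - c).
  { pose proof (Hu_below q Hq eq_refl); pose proof (Hu_far q Hq) as Hq_far.
    unfold sqdist in Hq_far; simpl in *; nra. }
  set (m := (snd q + snd q') / 2).
  destruct (arc_level_point e He q q' m Hq Hq' ltac:(unfold m; lra)) as [z [Hz Hzm]].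
  assert (Hzq' : 0 < (fst q' - fst z)^2).
  { destruct He as [_ [_ Hbt]].
    destruct (Hbt q z q' Hq Hz Hq' ltac:(unfold m in *; lra)); nra. }
  pose proof (arc_xgap_below e He q z q' Hq Hz Hq' ltac:(unfold m in *; lra)) as Hqz.
  set (D := Rmin (d^2 + (fst q' - fst z)^2) ((m - c)^2)).
  assert (HDd : d^2 < D) by (apply Rmin_glb_lt; unfold m; nra).
  enough (D <= d^2) by lra.
  apply (dist_is_sq_ge (fst q', c) e d); [assumption | lra |].
  intros r Hr; unfold sqdist; simpl.
  pose proof (Rmin_l (d^2 + (fst q' - fst z)^2) ((m - c)^2)) as HDlow.
  pose proof (Rmin_r (d^2 + (fst q' - fst z)^2) ((m - c)^2)) as HDhigh.
  fold D in HDlow, HDhigh.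
  destruct (Rle_or_lt (snd r) (snd q)) as [Hrq | Hrq];
    [|destruct (Rle_or_lt (snd r) m) as [Hrm | Hrm]].
  - pose proof (arc_xgap_below e He r q q' Hr Hq Hq' ltac:(lra)).
    pose proof (Hu_far r Hr); unfold sqdist in *; simpl in *.
    pose proof (pow2_ge_0 (fst q - fst z)); lra.
  - pose proof (arc_xgap_below e He r z q' Hr Hz Hq' ltac:(unfold m in *; lra)).
    pose proof (pow2_ge_0 (fst z - fst r)); nra.
  - pose proof (pow2_ge_0 (fst q' - fst r)); unfold m in *; nra.
Qed.

End OffsetMinus.

Lemma offset_minus_vertical_unique e d c u w : monotone_arc e -> 0 < d ->
  offset_minus e d (c, u) -> offset_minus e d (c, w) -> u = w.
Proof.
  intros He Hd Hu Hw.
  destruct (Rtotal_order u w) as [Hlt | [Heq | Hgt]]; [exfalso | exact Heq | exfalso].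
  - exact (offset_minus_vertical_lt e d He Hd c u w Hlt Hu Hw).
  - exact (offset_minus_vertical_lt e d He Hd c w u Hgt Hw Hu).
Qed.

Lemma offset_minus_horizontal_unique e d c u w : monotone_arc e -> 0 < d ->
  offset_minus e d (u, c) -> offset_minus e d (w, c) -> u = w.
Proof.
  intros He Hd Hu Hw.
  pose proof Hu as [[[q [Hq Hqx]] _] _]; pose proof Hw as [[[q' [Hq' Hqx']] _] _].
  simpl in Hqx, Hqx'.
  destruct (Rtotal_order (snd q) (snd q')) as [Hlt | [Heq | Hgt]]; [exfalso | | exfalso].
  - exact (offset_minus_horizontal_lt e d He Hd c u w q q' Hu Hw Hq Hqx Hq' Hqx' Hlt).
  - destruct He as [Hym _]; rewrite <- Hqx, <- Hqx'; now rewrite (Hym q q' Hq Hq' Heq).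
  - exact (offset_minus_horizontal_lt e d He Hd c w u q' q Hw Hu Hq' Hqx' Hq Hqx Hgt).
Qed.

Lemma monotone_set_of_unique (S : pset) :
  (forall c u w, S (c, u) -> S (c, w) -> u = w) ->
  (forall c u w, S (u, c) -> S (w, c) -> u = w) -> monotone_set S.
Proof.
  intros Hvert Hhor; split; intros c u v w Hu Hw Huvw.
  - pose proof (Hvert c u w Hu Hw); subst w; replace v with u by lra; exact Hu.
  - pose proof (Hhor c u w Hu Hw); subst w; replace v with u by lra; exact Hu.
Qed.

Lemma offset_minus_monotone e d : monotone_arc e -> 0 < d ->
  monotone_set (offset_minus e d).
Proof.
  intros He Hd; apply monotone_set_of_unique; intros c u w.
  - exact (offset_minus_vertical_unique e d c u w He Hd).
  - exact (offset_minus_horizontal_unique e d c u w He Hd).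
Qed.

Definition reflect_y (e : pset) : pset := fun a => e (fst a, - snd a).

Lemma monotone_arc_reflect_y e : monotone_arc e -> monotone_arc (reflect_y e).
Proof.
  intros [Hym [Hivt Hbt]]; unfold reflect_y; split; [|split].
  - intros [a1 a2] [b1 b2] Ha Hb Hab; simpl in *.
    assert (Hr : (a1, - a2) = (b1, - b2)) by (apply Hym; simpl; auto; lra).
    injection Hr; intros; f_equal; lra.
  - intros r q h Hr Hq Hh.
    destruct (Hivt (fst q, - snd q) (fst r, - snd r) (- h) Hq Hr ltac:(simpl; lra))
      as [s [Hs Hsh]].
    exists (fst s, - snd s); simpl.
    rewrite Ropp_involutive, <- surjective_pairing; split; [exact Hs | simpl in Hsh; lra].
  - intros r s t Hr Hs Ht Hrst.
    apply between_sym, (Hbt _ _ _ Ht Hs Hr); simpl; lra.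
Qed.

Lemma edist_reflect_y x y q : edist (x, - y) q = edist (x, y) (fst q, - snd q).
Proof. unfold edist; simpl; f_equal; ring. Qed.

Lemma offset_plus_reflect_y e d x y :
  offset_plus e d (x, y) -> offset_minus (reflect_y e) d (x, - y).
Proof.
  assert (Hinv : forall q : pt, (fst q, - - snd q) = q)
    by (intros [q1 q2]; simpl; now rewrite Ropp_involutive).
  intros [[[q [Hq Hqx]] Habove] [Hlb Hglb]]; unfold reflect_y; split; [split|split].
  - exists (fst q, - snd q); simpl; rewrite Hinv; auto.
  - intros q' Hq' Hx; simpl in *; pose proof (Habove _ Hq' Hx); simpl in *; lra.
  - intros q' Hq'; rewrite edist_reflect_y; apply Hlb, Hq'.
  - intros d' Hd'; apply Hglb; intros q' Hq'.
    specialize (Hd' (fst q', - snd q')); simpl in Hd'.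
    rewrite Hinv, edist_reflect_y in Hd'; simpl in Hd'; rewrite Hinv in Hd'; auto.
Qed.

Lemma offset_plus_monotone e d : monotone_arc e -> 0 < d ->
  monotone_set (offset_plus e d).
Proof.
  intros He Hd.
  pose proof (monotone_arc_reflect_y e He) as He'.
  apply monotone_set_of_unique; intros c u w Hu Hw;
    apply offset_plus_reflect_y in Hu, Hw.
  - apply Ropp_eq_reg; exact (offset_minus_vertical_unique _ d c _ _ He' Hd Hu Hw).
  - exact (offset_minus_horizontal_unique _ d (- c) u w He' Hd Hu Hw).
Qed.

Theorem lemma9 (e : pset) (delta : R) :
  is_curve e -> 0 < delta ->
  monotone_set (offset_minus e delta) /\ monotone_set (offset_plus e delta).
Proof.
  intros Hcurve Hdelta.
  pose proof (curve_monotone_arc e Hcurve) as He.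
  split; [apply offset_minus_monotone | apply offset_plus_monotone]; assumption.
Qed.
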